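(* Fix $\alpha\in(0,1)$ and $p,q\in[0,1]$ with $q=\alpha p$. Let $\hat{\mathcal{M}}^\ast(p,q)$ be the output of the greedy procedure \texttt{OptSupplierSet}$(p,q)$, and let $\mathcal{M}^\ast$ be a maximizer of $R(p,q,\mathcal{M})$ over all $\mathcal{M}\subseteq\widetilde{S}(q)$ with $|\mathcal{M}|\le b$. Then $$R(p,q,\hat{\mathcal{M}}^\ast(p,q))\ \ge\ \Big(1-\frac1e\Big)R(p,q,\mathcal{M}^\ast).$$
   Context: Let $\mathcal{G}=(\mathcal{U},\mathcal{E})$ be a finite directed graph without self-loops, $\mathcal{U}=\{1,\dots,U\}$. For $u,v\in\mathcal{U}$, $D(u,v;\mathcal{G})$ denotes the number of edges of a shortest directed path from $u$ to $v$ in $\mathcal{G}$, with $D(u,v;\mathcal{G})=+\infty$ if there is no such path. For an integer $d\ge0$, the $d$-visible set of $u$ is $\mathcal{V}(u,d;\mathcal{G})=\{v\in\mathcal{U}: D(v,u;\mathcal{G})\le d\}$. Fix an integer social visibility threshold $\tau\ge1$. Let $\mathcal{R}\subseteq\mathcal{U}$ (requesters) and $\mathcal{S}\subseteq\mathcal{U}$ (suppliers) be disjoint. Each requester $u\in\mathcal{R}$ has a valuation $p_u\in[0,1]$ and each supplier $u\in\mathcal{S}$ has a valuation $q_u\in[0,1]$. Let $b$ be a positive integer (budget). For $p\in[0,1]$ let $\widetilde{R}(p)=\{u\in\mathcal{R}: p_u\ge p\}$ and for $q\in[0,1]$ let $\widetilde{S}(q)=\{u\in\mathcal{S}: q_u\le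 q\}$. For $\mathcal{M}\subseteq\mathcal{S}$ let $\widetilde{G}(p,\mathcal{M})$ be the graph obtained from $\mathcal{G}$ by adding a directed edge from every $s\in\mathcal{M}$ to every $r\in\widetilde{R}(p)$. For $u\in\widetilde{R}(p)$ let $I_u(p,\mathcal{M})=|\mathcal{V}(u,\tau;\widetilde{G}(p,\mathcal{M}))\setminus\mathcal{V}(u,\tau;\mathcal{G})|$, and $I(p,\mathcal{M})=\sum_{u\in\widetilde{R}(p)}I_u(p,\mathcal{M})$. The revenue is $R(p,q,\mathcal{M})=p\,I(p,\mathcal{M})-q\,I(p,\mathcal{M})$. The greedy procedure \texttt{OptSupplierSet}$(p,q)$: start with $\mathcal{M}=\emptyset$; for $t=1,\dots,b$, pick $u^\ast\in\widetilde{S}(q)$ maximizing the marginal gain $R(p,q,\mathcal{M}\cup\{u\})-R(p,q,\mathcal{M})$ (ties broken arbitrarily) and set $\mathcal{M}\leftarrow\mathcal{M}\cup\{u^\ast\}$; output $\hat{\mathcal{M}}^\ast(p,q)=\mathcal{M}$ (a subset of $\widetilde{S}(q)$ of size at most $b$). *)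

From HB Require Import structures.
From mathcomp Require Import all_boot all_order all_algebra.
From mathcomp Require Import reals sequences exp.
Set Implicit Arguments. Unset Strict Implicit. Unset Printing Implicit Defensive.
Import Order.TTheory GRing.Theory Num.Theory.
Local Open Scope ring_scope.

(* Vertices are 'I_n; a directed graph is an edge relation e : rel 'I_n
   (e x y = there is an edge from x to y). *)

(* within e d v u : there is a directed walk from v to u in e with at most d
   edges, i.e. D(v,u;e) <= d (a shortest walk is a shortest path). *)
Fixpoint within (n : nat) (e : rel 'I_n) (d : nat) (v u : 'I_n) : bool :=
  match d with
  | 0 => v == u
  | d'.+1 => within e d' v u || [exists w, e v w && within e d' w u]
  end.

Definition visible (n : nat) (e : rel 'I_n) (u : 'I_n) (d : nat) : {set 'I_n} :=
  [set v | within e d v u].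

Section Model.
Variables (R : realType) (n : nat) (e : rel 'I_n) (tau : nat)
  (Rq Sp : {set 'I_n}) (pv qv : 'I_n -> R).

Definition Rtil (p : R) : {set 'I_n} := [set u in Rq | p <= pv u].
Definition Stil (q : R) : {set 'I_n} := [set u in Sp | qv u <= q].

Definition Gtil (p : R) (M : {set 'I_n}) : rel 'I_n :=
  fun x y => e x y || ((x \in M) && (y \in Rtil p)).

Definition Iu (p : R) (M : {set 'I_n}) (u : 'I_n) : nat :=
  #|visible (Gtil p M) u tau :\: visible e u tau|.

Definition Itot (p : R) (M : {set 'I_n}) : nat :=
  (\sum_(u in Rtil p) Iu p M u)%N.

Definition revenue (p q : R) (M : {set 'I_n}) : R :=
  p * (Itot p M)%:R - q * (Itot p M)%:R.

(* Ms : nat -> {set 'I_n} is a run of the greedy procedure OptSupplierSet(p,q)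
   with budget b (ties broken arbitrarily): Ms 0 = set0 and at each step
   t < b a maximizer u* of the marginal gain over \tilde S(q) is added
   (if \tilde S(q) is empty nothing can be picked and M stays unchanged). *)
Definition greedy_run (p q : R) (b : nat) (Ms : nat -> {set 'I_n}) : Prop :=
  Ms 0%N = set0 /\
  forall t, (t < b)%N ->
    (Stil q = set0 /\ Ms t.+1 = Ms t) \/
    exists2 us, us \in Stil q &
      (Ms t.+1 = us |: Ms t /\
       forall u, u \in Stil q ->
         revenue p q (u |: Ms t) - revenue p q (Ms t)
           <= revenue p q (us |: Ms t) - revenue p q (Ms t)).

Definition optimal_set (p q : R) (b : nat) (Mstar : {set 'I_n}) : Prop :=
  Mstar \subset Stil q /\ (#|Mstar| <= b)%N /\
  forall M : {set 'I_n}, M \subset Stil q -> (#|M| <= b)%N -> revenue p q M <= revenue p q Mstar.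

End Model.

(* Since q = alpha * p with alpha < 1, the revenue is R(M) = (p - q) I(M)
   with p - q >= 0, so it suffices that the influence M |-> I(p,M) is a
   normalized, monotone, submodular set function; the classical
   Nemhauser-Wolsey-Fisher bound for greedy maximization under a
   cardinality constraint then applies. *)

From Pilot Require Import Defs.
From HB Require Import structures.
From mathcomp Require Import all_boot all_order all_algebra.
From mathcomp Require Import reals sequences exp.
From mathcomp Require Import lra zify.
Import Order.TTheory GRing.Theory Num.Theory.
Set Implicit Arguments. Unset Strict Implicit.
Local Open Scope ring_scope.

Section Walks.
Variables (n : nat) (g : rel 'I_n).

Lemma within_mono_d d d' v u :
  (d <= d')%N -> within g d v u -> within g d' v u.
Proof.
elim: d' v => [|d' IH] v; first by rewrite leqn0 => /eqP ->.
rewrite leq_eqVlt => /orP [/eqP -> //| lt_dd'] walk /=.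
by rewrite (IH v lt_dd' walk).
Qed.

Lemma within_subrel (g' : rel 'I_n) d v u :
  subrel g g' -> within g d v u -> within g' d v u.
Proof.
move=> sub_gg'; elim: d v => [|d IH] v //= /orP [walk|/existsP [w /andP [vw walk]]].
  by rewrite IH.
by apply/orP; right; apply/existsP; exists w; rewrite sub_gg' // IH.
Qed.

Lemma within_cat a c v w u :
  within g a v w -> within g c w u -> within g (a + c) v u.
Proof.
elim: a v => [|a IH] v /=; first by move=> /eqP ->.
move=> /orP [walk|/existsP [x /andP [vx walk]]] walk'; first by rewrite (IH _ walk walk').
by apply/orP; right; apply/existsP; exists x; rewrite vx (IH _ walk walk').
Qed.

Lemma within_edge v w : g v w -> within g 1 v w.
Proof. by move=> vw /=; apply/orP; right; apply/existsP; exists w; rewrite vw eqxx. Qed.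

End Walks.

Section Augmented.
Variables (R : realType) (n : nat) (e : rel 'I_n) (Rq : {set 'I_n}) (pv : 'I_n -> R)
  (p : R).

Local Notation G M := (Gtil e Rq pv p M).

Definition jump_walk (M : {set 'I_n}) (d : nat) (v u : 'I_n) : Prop :=
  exists s r d1 d2, [/\ s \in M, r \in Rtil Rq pv p, (d1 + d2 < d)%N,
                        within e d1 v s & within e d2 r u].

Lemma e_sub_G (M : {set 'I_n}) : subrel e (G M).
Proof. by move=> x y exy; rewrite /Gtil exy. Qed.

(* A walk in G(M) either stays in e or uses a new edge; for the latter we
   keep its first new edge and relax the remainder to an arbitrary walk. *)
Lemma within_G_split (M : {set 'I_n}) d v u :
  within (G M) d v u -> within e d v u \/ jump_walk M d v u.
Proof.
elim: d v => [|d IH] v /=; first by left.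
move=> /orP [walk|/existsP [w /andP [vw walk]]].
  case: (IH v walk) => [ewalk|[s [r [d1 [d2 [Ms Rr lt_d Hvs Hru]]]]]]; first by left; rewrite ewalk.
  by right; exists s, r, d1, d2; split => //; apply: ltnW.
move: vw; rewrite /Gtil => /orP [evw|/andP [Mv Rw]].
  case: (IH w walk) => [ewalk|[s [r [d1 [d2 [Ms Rr lt_d Hws Hru]]]]]].
    by left; apply/orP; right; apply/existsP; exists w; rewrite evw ewalk.
  right; exists s, r, d1.+1, d2; split => //.
  by apply/orP; right; apply/existsP; exists w; rewrite evw.
right; case: (IH w walk) => [ewalk|[s [r [d1 [d2 [Ms Rr lt_d Hws Hru]]]]]].
  by exists v, w, 0%N, d; split => /=.
exists v, r, 0%N, d2; split => //=.
by rewrite ltnS (leq_trans (leq_addl d1 d2)) // ltnW.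
Qed.

Lemma jump_walk_within (M : {set 'I_n}) d v u : jump_walk M d v u -> within (G M) d v u.
Proof.
move=> [s [r [d1 [d2 [Ms Rr lt_d Hvs Hru]]]]].
have sr : G M s r by rewrite /Gtil Ms Rr orbT.
have walk := within_cat (within_cat (within_subrel (e_sub_G M) Hvs) (within_edge sr))
                        (within_subrel (e_sub_G M) Hru).
by apply: within_mono_d walk; rewrite addn1 addSn.
Qed.

Lemma jump_walk_mono (A B : {set 'I_n}) d v u :
  A \subset B -> jump_walk A d v u -> jump_walk B d v u.
Proof.
move=> AB [s [r [d1 [d2 [As Rr lt_d Hvs Hru]]]]].
by exists s, r, d1, d2; split => //; apply: (subsetP AB).
Qed.

Variable tau : nat.

Local Notation V M u := (visible (G M) u tau).

Lemma visible_e_sub (M : {set 'I_n}) u : visible e u tau \subset V M u.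
Proof. by apply/subsetP => v; rewrite !inE; apply: within_subrel; apply: e_sub_G. Qed.

Lemma visible_mono (A B : {set 'I_n}) u : A \subset B -> V A u \subset V B u.
Proof.
move=> AB; apply/subsetP => v; rewrite !inE => /within_G_split [ewalk|jw].
  exact: within_subrel (e_sub_G B) ewalk.
exact/jump_walk_within/(jump_walk_mono AB).
Qed.

(* Covering property behind submodularity: a vertex seen with x |: B is
   seen either with B alone or with x |: A (the new edge used starts at x
   or in B). *)
Lemma visible_cover (A B : {set 'I_n}) x u :
  A \subset B -> V (x |: B) u \subset V B u :|: V (x |: A) u.
Proof.
move=> AB; apply/subsetP => v; rewrite !inE => /within_G_split [ewalk|].
  by rewrite (within_subrel (e_sub_G B) ewalk).
move=> [s [r [d1 [d2 [/setU1P [-> | Bs] Rr lt_d Hvs Hru]]]]].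
  apply/orP; right; apply: jump_walk_within.
  by exists x, r, d1, d2; rewrite setU11.
apply/orP; left; apply: jump_walk_within.
by exists s, r, d1, d2.
Qed.

Lemma visible_set0 u : V set0 u = visible e u tau.
Proof.
apply/eqP; rewrite eqEsubset visible_e_sub andbT; apply/subsetP => v.
rewrite !inE => /within_G_split [//|[s [r [d1 [d2 [] ]]]]].
by rewrite inE.
Qed.

End Augmented.

Lemma card_cover_le (T : finType) (X Y Z W : {set T}) :
  W \subset Y -> W \subset Z -> X \subset Y :|: Z -> (#|X| + #|W| <= #|Z| + #|Y|)%N.
Proof.
move=> WY WZ XYZ.
have le_X := subset_leq_card XYZ.
have le_W : (#|W| <= #|Y :&: Z|)%N by apply: subset_leq_card; rewrite subsetI WY WZ.
have := cardsUI Y Z; lia.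
Qed.

Section Influence.
Variables (R : realType) (n : nat) (e : rel 'I_n) (tau : nat) (Rq : {set 'I_n})
  (pv : 'I_n -> R) (p : R).

Local Notation I := (Itot e tau Rq pv p).
Local Notation Iu := (Iu e tau Rq pv p).

Lemma Iu_mono (A B : {set 'I_n}) u : A \subset B -> (Iu A u <= Iu B u)%N.
Proof. by move=> AB; apply/subset_leq_card/setSD/visible_mono. Qed.

Lemma Iu_submod (A B : {set 'I_n}) x u : A \subset B ->
  (Iu (x |: B) u + Iu A u <= Iu (x |: A) u + Iu B u)%N.
Proof.
move=> AB; apply: card_cover_le.
- exact/setSD/visible_mono.
- exact/setSD/visible_mono/subsetUr.
- by rewrite -setDUl; apply/setSD/visible_cover.
Qed.

Lemma Itot_set0 : I set0 = 0%N.
Proof. by apply: big1 => u _; rewrite /Defs.Iu visible_set0 setDv cards0. Qed.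

Lemma Itot_mono (A B : {set 'I_n}) : A \subset B -> (I A <= I B)%N.
Proof. by move=> AB; apply: leq_sum => u _; apply: Iu_mono. Qed.

Lemma Itot_submod (A B : {set 'I_n}) x : A \subset B -> (I (x |: B) + I A <= I (x |: A) + I B)%N.
Proof. by move=> AB; rewrite /Itot -!big_split; apply: leq_sum => u _; apply: Iu_submod. Qed.

End Influence.

(* (1 - 1/b)^b <= 1/e, from 1 + x <= exp x. *)
Lemma one_sub_inv_pow_le_expR (R : realType) (b : nat) : (0 < b)%N ->
  (1 - (b%:R : R)^-1) ^+ b <= (expR (1 : R))^-1.
Proof.
move=> b_gt0.
have b_pos : 0 < (b%:R : R) by rewrite ltr0n.
have c_ge0 : 0 <= 1 - (b%:R : R)^-1 by rewrite subr_ge0 invf_le1 // ler1n.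
have le_exp : 1 - (b%:R : R)^-1 <= expR (- b%:R^-1) := expR_ge1Dx _.
apply: le_trans (lerXn2r _ _ _ le_exp) _; rewrite ?nnegrE ?expR_ge0 //.
by rewrite -expRM_natr mulNr mulVf ?gt_eqF // expRN.
Qed.

Section Greedy.
Variables (R : realType) (T : finType) (f : {set T} -> R).
Hypothesis f_set0 : f set0 = 0.
Hypothesis f_mono : forall A B : {set T}, A \subset B -> f A <= f B.
Hypothesis f_submod :
  forall (A B : {set T}) x, A \subset B -> f (x |: B) - f B <= f (x |: A) - f A.

Lemma f_ge0 (A : {set T}) : 0 <= f A.
Proof. by rewrite -f_set0; apply/f_mono/sub0set. Qed.

Definition greedy_trace (S : {set T}) (b : nat) (Ms : nat -> {set T}) : Prop :=
  Ms 0%N = set0 /\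
  forall t, (t < b)%N -> (S = set0 /\ Ms t.+1 = Ms t) \/
    exists2 us, us \in S & (Ms t.+1 = us |: Ms t /\
      forall u, u \in S -> f (u |: Ms t) - f (Ms t) <= f (us |: Ms t) - f (Ms t)).

(* Adding the elements of s one by one: by submodularity each addition
   gains at most its marginal gain with respect to M. *)
Lemma f_union_le (M : {set T}) (s : seq T) :
  f ([set x in s] :|: M) <= f M + \sum_(x <- s) (f (x |: M) - f M).
Proof.
elim: s => [|a s IH].
  by rewrite big_nil addr0; apply/f_mono/subsetP => x; rewrite !inE.
rewrite big_cons.
have -> : [set x in a :: s] :|: M = a |: ([set x in s] :|: M).
  by apply/setP => x; rewrite !inE orbA.
have := f_submod a (subsetUr [set x in s] M); lra.
Qed.

Lemma greedy_gain (S M Mstar : {set T}) (b : nat) us :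
  Mstar \subset S -> (#|Mstar| <= b)%N ->
  (forall u, u \in S -> f (u |: M) - f M <= f (us |: M) - f M) ->
  f Mstar - f M <= b%:R * (f (us |: M) - f M).
Proof.
move=> MS card_le best.
set g := f (us |: M) - f M.
have g_ge0 : 0 <= g by rewrite subr_ge0; apply/f_mono/subsetUr.
have cover : f Mstar <= f ([set x in enum Mstar] :|: M).
  by apply: f_mono; apply/subsetP => x Mx; rewrite !inE mem_enum Mx.
have gains : \sum_(x <- enum Mstar) (f (x |: M) - f M) <= #|Mstar|%:R * g.
  rewrite big_enum /= mulr_natl -sumr_const.
  by apply: ler_sum => x Mx; apply/best/(subsetP MS).
have : #|Mstar|%:R * g <= b%:R * g by apply: ler_wpM2r => //; rewrite ler_nat.
have := f_union_le M (enum Mstar); lra.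
Qed.

Lemma greedy_bound (S : {set T}) (b : nat) (Ms : nat -> {set T}) (Mstar : {set T}) :
  (0 < b)%N -> greedy_trace S b Ms -> Mstar \subset S -> (#|Mstar| <= b)%N ->
  forall t, (t <= b)%N -> f Mstar - f (Ms t) <= (1 - b%:R^-1) ^+ t * f Mstar.
Proof.
move=> b_gt0 [Ms0 step] MS card_le; elim => [|t IH] lt_tb.
  by rewrite Ms0 f_set0 expr0 mul1r subr0.
have b_pos : 0 < (b%:R : R) by rewrite ltr0n.
have c_ge0 : 0 <= 1 - (b%:R : R)^-1 by rewrite subr_ge0 invf_le1 // ler1n.
case: (step t lt_tb) => [[S0 ->]|[us Sus [-> best]]].
  have -> : Mstar = set0 by apply/eqP; rewrite -subset0 -S0.
  by rewrite f_set0 mulr0 sub0r oppr_le0 f_ge0.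
have gain := greedy_gain MS card_le best.
have gain' : (f Mstar - f (Ms t)) / b%:R <= f (us |: Ms t) - f (Ms t).
  by rewrite ler_pdivrMr // mulrC.
rewrite exprS -mulrA; apply: le_trans (ler_wpM2l c_ge0 (IH (ltnW lt_tb))).
rewrite mulrBl mul1r; lra.
Qed.

Lemma greedy_approx (S : {set T}) (b : nat) (Ms : nat -> {set T}) (Mstar : {set T}) :
  (0 < b)%N -> greedy_trace S b Ms -> Mstar \subset S -> (#|Mstar| <= b)%N ->
  (1 - (expR 1)^-1) * f Mstar <= f (Ms b).
Proof.
move=> b_gt0 trace MS card_le.
have gap := greedy_bound b_gt0 trace MS card_le (leqnn b).
have := ler_wpM2r (f_ge0 Mstar) (one_sub_inv_pow_le_expR R b_gt0).
lra.
Qed.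

End Greedy.

Lemma revenue_scaled (R : realType) (n : nat) (e : rel 'I_n) (tau : nat)
  (Rq : {set 'I_n}) (pv : 'I_n -> R) (p q : R) (M : {set 'I_n}) :
  revenue e tau Rq pv p q M = (p - q) * (Itot e tau Rq pv p M)%:R.
Proof. by rewrite /revenue mulrBl. Qed.

Theorem theorem3 (R : realType) (n : nat) (e : rel 'I_n)
  (e_irr : forall x, ~~ e x x)
  (tau : nat) (tau_ge1 : (1 <= tau)%N)
  (Rq Sp : {set 'I_n}) (hdisj : [disjoint Rq & Sp])
  (pv qv : 'I_n -> R)
  (hpv : forall u, u \in Rq -> 0 <= pv u <= 1)
  (hqv : forall u, u \in Sp -> 0 <= qv u <= 1)
  (b : nat) (b_pos : (0 < b)%N)
  (alpha p q : R) (halpha : 0 < alpha < 1)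
  (hp : 0 <= p <= 1) (hq : 0 <= q <= 1) (hqp : q = alpha * p)
  (Ms : nat -> {set 'I_n}) (Mstar : {set 'I_n}) :
  greedy_run e tau Rq Sp pv qv p q b Ms ->
  optimal_set e tau Rq Sp pv qv p q b Mstar ->
  revenue e tau Rq pv p q (Ms b) >=
    (1 - (expR 1)^-1) * revenue e tau Rq pv p q Mstar.
Proof.
move=> trace [MS [card_le _]].
have margin_ge0 : 0 <= p - q.
  by rewrite hqp; case/andP: halpha => ? ?; case/andP: hp => ? ?; nra.
set f := revenue e tau Rq pv p q.
have f_set0 : f set0 = 0 by rewrite /f revenue_scaled Itot_set0 mulr0.
have f_mono (A B : {set 'I_n}) : A \subset B -> f A <= f B.
  by move=> AB; rewrite /f !revenue_scaled ler_wpM2l // ler_nat Itot_mono.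
have f_submod (A B : {set 'I_n}) x :
    A \subset B -> f (x |: B) - f B <= f (x |: A) - f A.
  move=> AB; rewrite /f !revenue_scaled -!mulrBr ler_wpM2l //.
  have := Itot_submod e tau Rq pv p x AB; rewrite -(ler_nat R) !natrD; lra.
apply: (greedy_approx f_set0 f_mono f_submod b_pos _ MS card_le).
exact: trace.
Qed.
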